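(* Let $G=(V,E,L)$ be a graph with loops, let $\{i,i\}\in L^+$ and let $M_1\subset M_2\subseteq N(i)$ with $i\in M_1$. For $k=1,2$ let $\Sigma(M_k)$ denote the system $$z_{ii}\ \ge\sum_{J\subseteq M_k:\, i\in J}\frac{\big(\ell_{d_k}(J,M_k\setminus J)\big)^2}{\ell_{d_k-1}(J\setminus\{i\},M_k\setminus J)},\qquad \ell_{d_k}(J,M_k\setminus J)\ge 0\quad\forall J\subseteq M_k,$$ with $d_k:=|M_k|$, in the variables $z_{ii}$ and $z_S$, $S\subseteq M_k$, $S\neq\emptyset$. Then the system $\Sigma(M_1)$ is implied by $\Sigma(M_2)$: every assignment of the variables $z_{ii}$, $z_S$ ($S\subseteq M_2$) satisfying $\Sigma(M_2)$ satisfies $\Sigma(M_1)$ when restricted to the variables $z_{ii}$, $z_S$ ($S\subseteq M_1$).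
   Context: A graph with loops is $G=(V,E,L)$: $V$ finite node set, $E$ a set of unordered pairs of distinct nodes, $L$ a set of loops $\{i,i\}$ partitioned as $L=L^-\cup L^+$ (minus/plus loops). For a plus loop $\{i,i\}$, $N(i):=\{j\in V:\{i,j\}\in E\cup L\}$ (so $i\in N(i)$). Variables: $z_\emptyset:=1$, $z_{\{k\}}:=z_k$, and for $|S|\ge2$ a variable $z_S$ (equal to the edge variable when $S\in E$, auxiliary otherwise); the loop variable $z_{ii}$ is separate. For disjoint $J_1,J_2$ with $|J_1\cup J_2|=d$, $\ell_d(J_1,J_2):=\sum_{t\subseteq J_2}(-1)^{|t|}z_{J_1\cup t}$. Each $u^2/v$ denotes the closed perspective: $u^2/v$ if $v>0$, $0$ if $u=v=0$, $+\infty$ if $u\neq0,v=0$. *)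

From HB Require Import structures.
From mathcomp Require Import all_boot all_order all_algebra.
From mathcomp Require Import constructive_ereal.
Set Implicit Arguments. Unset Strict Implicit. Unset Printing Implicit Defensive.
Import Order.TTheory GRing.Theory Num.Theory.
Local Open Scope ring_scope.

(* A graph with loops G = (V, E, L^- ∪ L^+): edges are 2-element subsets of V,
   a loop {i,i} is identified with the node i; Lm / Lp are the nodes carrying
   a minus / plus loop (disjoint). *)
Definition graph_with_loops (V : finType) (E : {set {set V}}) (Lm Lp : {set V}) : Prop :=
  (forall e, e \in E -> #|e| = 2%N) /\ [disjoint Lm & Lp].

Definition nbhd (V : finType) (E : {set {set V}}) (Lm Lp : {set V}) (i : V) : {set V} :=
  [set j | ([set i; j] \in E) || ((j == i) && ((i \in Lm) || (i \in Lp)))].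

Definition zv (R : pzRingType) (V : finType) (z : {set V} -> R) (S : {set V}) : R :=
  if S == set0 then 1 else z S.

(* ℓ_d(J1,J2) = Σ_{t ⊆ J2} (-1)^{|t|} z_{J1 ∪ t}  (d = |J1 ∪ J2| is implicit) *)
Definition ell (R : pzRingType) (V : finType) (z : {set V} -> R) (J1 J2 : {set V}) : R :=
  \sum_(t : {set V} | t \subset J2) (-1) ^+ #|t| * zv z (J1 :|: t).

(* closed perspective u^2/v, valued in the extended reals
   (v < 0 lies outside the domain: +oo by convention). *)
Definition persp (R : realFieldType) (u v : R) : \bar R :=
  if 0 < v then ((u ^+ 2) / v)%:E
  else if (u == 0) && (v == 0) then 0%E else +oo%E.

Definition Sigma (R : realFieldType) (V : finType) (i : V) (M : {set V})
    (zii : R) (z : {set V} -> R) : Prop :=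
  (forall J : {set V}, J \subset M -> 0 <= ell z J (M :\: J)) /\
  (\sum_(J : {set V} | (J \subset M) && (i \in J))
      persp (ell z J (M :\: J)) (ell z (J :\ i) (M :\: J)) <= zii%:E)%E.

From HB Require Import structures.
From mathcomp Require Import all_boot all_order all_algebra.
From mathcomp Require Import constructive_ereal.
From mathcomp Require Import ring.

(* For j outside J1 and J2 the alternating sums obey the Pascal rule
   ℓ(J1, J2) = ℓ(J1, J2 + j) + ℓ(J1 + j, J2).  Hence, for j outside M, each
   constraint of Σ(M) indexed by J ⊆ M is the sum of the two constraints of
   Σ(M + j) indexed by J and J + j: nonnegativity survives the addition, and
   the perspective term is controlled because the closed perspective u^2/v is
   subadditive (convex and positively homogeneous).  Removing the nodes of
   M2 \ M1 one at a time proves the claim. *)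

Set Implicit Arguments.
Unset Strict Implicit.
Unset Printing Implicit Defensive.
Import Order.TTheory GRing.Theory Num.Theory.
Local Open Scope ring_scope.

Lemma big_subsetU1 (T : Type) (idx : T) (op : Monoid.com_law idx)
    (V : finType) (j : V) (D : {set V}) (F : {set V} -> T) :
  j \notin D ->
  \big[op/idx]_(K : {set V} | K \subset j |: D) F K =
  op (\big[op/idx]_(K : {set V} | K \subset D) F K)
     (\big[op/idx]_(K : {set V} | K \subset D) F (j |: K)).
Proof.
move=> jND.
have sub_jD (K : {set V}) : (K \subset D) = (K \subset j |: D) && (j \notin K).
  by rewrite -subsetD1 setU1K.
rewrite (bigID (fun K : {set V} => j \in K)) /= Monoid.mulmC; congr (op _ _).
  by apply: eq_bigl => K; rewrite sub_jD.
rewrite (reindex_onto (fun K => j |: K) (fun K => K :\ j)) /=; last first.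
  by move=> K /andP[_ jK]; rewrite setD1K.
apply: eq_bigl => K; rewrite setU11 andbT subUset sub1set setU11 sub_jD; congr (_ && _).
case: (boolP (j \in K)) => [jK | jNK]; last by rewrite setU1K ?eqxx.
by apply/negbTE/eqP => /setP/(_ j); rewrite !inE eqxx jK.
Qed.

Section AlternatingSums.

Variables (R : realFieldType) (V : finType) (z : {set V} -> R).

Lemma ell_setU1 (J1 J2 : {set V}) (j : V) :
  j \notin J1 -> j \notin J2 ->
  ell z J1 J2 = ell z J1 (j |: J2) + ell z (j |: J1) J2.
Proof.
move=> jNJ1 jNJ2; rewrite /ell big_subsetU1 //= -addrA -big_split /= -[LHS]addr0.
congr (_ + _); apply/esym/big1 => t sJ2.
have jNt : j \notin t by apply: contra jNJ2; apply: (subsetP sJ2).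
by rewrite cardsU1 jNt exprS setUCA setUA; ring.
Qed.

Lemma ell_setU1_compl (K J M : {set V}) (j : V) :
  j \notin M -> K \subset M -> J \subset M ->
  ell z K (M :\: J) =
  ell z K ((j |: M) :\: J) + ell z (j |: K) ((j |: M) :\: (j |: J)).
Proof.
move=> jNM sKM sJM.
have jNJ : j \notin J by apply: contra jNM; apply: (subsetP sJM).
have -> : (j |: M) :\: J = j |: (M :\: J).
  by apply/setP => x; rewrite !inE; case: eqVneq => // ->; rewrite jNJ.
have -> : (j |: M) :\: (j |: J) = M :\: J.
  apply/setP => x; rewrite !inE.
  by case: eqVneq => // ->; rewrite (negbTE jNM) andbF.
apply: ell_setU1; last by rewrite inE negb_and jNM orbT.
by apply: contra jNM; apply: (subsetP sKM).
Qed.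

End AlternatingSums.

Section Perspective.

Variable R : realFieldType.
Local Open Scope ereal_scope.

Lemma persp_ge0 (u v : R) : 0 <= persp u v.
Proof.
rewrite /persp; case: ifP => [v_gt0|_].
  by rewrite lee_fin divr_ge0 ?sqr_ge0 ?ltW.
by case: ifP; rewrite ?leey.
Qed.

Lemma persp_cases (u v : R) :
  [\/ persp u v = +oo, (0 < v)%R /\ persp u v = (u ^+ 2 / v)%:E | u = 0%R /\ v = 0%R].
Proof.
rewrite /persp; case: ifP => [v_gt0|_]; first by apply: Or32.
by case: ifP => [/andP[/eqP -> /eqP ->]|_]; [apply: Or33 | apply: Or31].
Qed.

Lemma persp00 : persp (0 : R) 0 = 0.
Proof. by rewrite /persp ltxx eqxx. Qed.

Lemma sqrD_divD_le (u1 u2 v1 v2 : R) : (0 < v1)%R -> (0 < v2)%R ->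
  ((u1 + u2) ^+ 2 / (v1 + v2) <= u1 ^+ 2 / v1 + u2 ^+ 2 / v2)%R.
Proof.
move=> v1_gt0 v2_gt0; rewrite -subr_ge0.
have -> : (u1 ^+ 2 / v1 + u2 ^+ 2 / v2 - (u1 + u2) ^+ 2 / (v1 + v2)
    = (u1 * v2 - u2 * v1) ^+ 2 / (v1 * v2 * (v1 + v2)))%R.
  by field; rewrite !lt0r_neq0 ?addr_gt0.
by rewrite divr_ge0 ?sqr_ge0 // ltW // !mulr_gt0 ?addr_gt0.
Qed.

Lemma perspD_le (u1 v1 u2 v2 : R) :
  persp (u1 + u2) (v1 + v2) <= persp u1 v1 + persp u2 v2.
Proof.
have persp_neqNy (u v : R) : persp u v != -oo.
  by have := persp_ge0 u v; case: persp.
have [->|[v1_gt0 ->]|[-> ->]] := persp_cases u1 v1.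
- by rewrite addye ?leey.
- have [->|[v2_gt0 ->]|[-> ->]] := persp_cases u2 v2.
  + by rewrite addey ?leey.
  + by rewrite /persp addr_gt0 // lee_fin sqrD_divD_le.
  + by rewrite !addr0 persp00 adde0 /persp v1_gt0.
- by rewrite !add0r persp00 add0e.
Qed.

End Perspective.

Section SigmaRestriction.

Variables (R : realFieldType) (V : finType) (i : V) (zii : R) (z : {set V} -> R).

Lemma Sigma_setU1 (j : V) (M : {set V}) :
  j \notin M -> i \in M -> Sigma i (j |: M) zii z -> Sigma i M zii z.
Proof.
move=> jNM iM [ell_ge0 persp_sum_le].
have neq_ij : i != j by apply: contraNneq jNM => <-.
split=> [J sJM|].
  rewrite (ell_setU1_compl z jNM sJM sJM) addr_ge0 ?ell_ge0 ?setUS //.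
  exact: subset_trans sJM (subsetUr _ _).
apply: le_trans persp_sum_le.
rewrite [X in (_ <= X)%E]big_mkcondr big_subsetU1 //= -!big_mkcondr.
under [X in (_ + X)%E]eq_bigl => J do rewrite in_setU1 (negbTE neq_ij).
rewrite -big_split /=; apply: lee_sum => J /andP[sJM _].
have -> : (j |: J) :\ i = j |: (J :\ i).
  by apply/setP => x; rewrite !inE; case: eqVneq => // ->; rewrite (negbTE neq_ij).
have sJiM : J :\ i \subset M := subset_trans (subD1set J i) sJM.
rewrite (ell_setU1_compl z jNM sJM sJM) (ell_setU1_compl z jNM sJiM sJM).
exact: perspD_le.
Qed.

Lemma Sigma_subset (M1 M2 : {set V}) :
  M1 \subset M2 -> i \in M1 -> Sigma i M2 zii z -> Sigma i M1 zii z.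
Proof.
move=> + iM1; elim: {M2}_.+1 {-2}M2 (ltnSn #|M2|) => // n IH M2 M2_lt sM12 SigM2.
have [-> //|neqM12] := eqVneq M1 M2.
have /properP[_ [j M2j M1Nj]] : M1 \proper M2 by rewrite properEneq neqM12.
have sM1M2j : M1 \subset M2 :\ j by rewrite subsetD1 sM12.
apply: (IH (M2 :\ j)) => //; first by rewrite (cardsD1 j M2) M2j in M2_lt.
by apply: (@Sigma_setU1 j); rewrite ?setD11 ?(subsetP sM1M2j) ?setD1K.
Qed.

End SigmaRestriction.

Theorem proposition6 (R : realFieldType) (V : finType) (E : {set {set V}})
    (Lm Lp : {set V}) (i : V) (M1 M2 : {set V}) :
  graph_with_loops E Lm Lp ->
  i \in Lp ->
  M1 \proper M2 -> M2 \subset nbhd E Lm Lp i -> i \in M1 ->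
  forall (zii : R) (z : {set V} -> R),
    Sigma i M2 zii z -> Sigma i M1 zii z.
Proof.
move=> _ _ /proper_sub sM12 _ iM1 zii z.
exact: Sigma_subset sM12 iM1.
Qed.
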